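(* Let $G$ be a graph with $N$ vertices, let $Q^\dagger$ be an operator with $[\sum_i s_i^\dagger s_i,Q^\dagger]=cQ^\dagger$ for a constant $c$, let $L$ be the largest integer with $|Q^L\rangle\neq0$, and let $\alpha,\beta,\gamma$ be functions from the positive integers to the positive reals such that $Q^\dagger$ satisfies properties (P.1) with $\alpha$, (P.2) with $\beta$, and (P.3) with $\gamma$. Let $H$ be a $k$-local operator of range at most $R$ (with $k,R\ge1$) such that $H|Q^p\rangle=E_p|Q^p\rangle$ for all $p\in\{0,\dots,L\}$, and suppose $N>\beta(\alpha(R))\,\gamma(k)$. Then $E_p=\Omega+\omega p$ for all $p\in\{0,\dots,L\}$, where $\Omega=\Omega'$ and $\omega=c\,\omega'$ with $\Omega',\omega'$ the constants provided by (P.1) for $H$.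
   Context: System of $N$ qubits on the vertices of a graph $G$ with local basis $|0\rangle,|1\rangle$. For each vertex $i$, $s_i^\dagger$ acts on $i$ as $s^\dagger|0\rangle=|1\rangle$, $s^\dagger|1\rangle=0$, $s_i=(s_i^\dagger)^\dagger$; $|\overline 0\rangle=|0\rangle^{\otimes N}$. Distances are graph distances; for a vertex set $X$, $\mathrm{diam}(X)=1+\max_{i,j\in X}(\text{distance})$; an operator is supported in $X$ if it acts as identity outside $X$. Every operator has a unique expansion in normal-ordered strings $s^\dagger_{j_1}\cdots s^\dagger_{j_n}s_{k_1}\cdots s_{k_m}$ (the $j$'s pairwise distinct, the $k$'s pairwise distinct); a string has range $R$ where $R$ is the smallest positive integer with all pairwise distances between its sites $<R$; an operator has range at most $R$ if all its strings with nonzero coefficient do, and is $k$-local if each such string involves at most $k$ sites. Operators need not be Hermitian. Tower: $|Q^p\rangle=(Q^\dagger)^p|\overline 0\rangle$ (unnormalized), so $|Q^0\rangle=|\overline 0\rangle$, $|Q\rangle=|Q^1\rangle$. Properties: (P.1) with $\alpha$: for every positive integer $R$ and every operator $H$ of range at most $R$ with $H|Q^0\rangle\propto|Q^0\rangle$ and $H|Q^1\rangle\propto|Q^1\rangle$, there exist constants $\Omega',\omega'$ and operators $h_X$, indexed by vertex sets $X$ with $\mathrm{diam}(X)\le\alpha(R)$, each supported in $X$ with $h_X|Q\rangle=h_X|\overline 0\rangle=0$, such that $H=\Omega' I+\omega'\sum_i s_i^\dagger s_i+\sum_{X:\mathrm{diam}(X)\le\alpha(R)}h_X$. (P.2) with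 $\beta$: for every positive integer $R_{\max}$ and every family of operators $h_X$ (indexed by vertex sets $X$ with $\mathrm{diam}(X)\le R_{\max}$, each supported in $X$, with $h_X|Q\rangle=h_X|\overline 0\rangle=0$), if $\left(\sum_X h_X\right)|Q^p\rangle=E'_p|Q^p\rangle$ for some $p\le\min(L,N/\beta(R_{\max}))$, then $E'_p=0$. (P.3) with $\gamma$: for every $k\ge1$ and every $k$-local operator $H$, if $H|Q^q\rangle=0$ for all $q\le\min(\gamma(k),L)$, then $H|Q^p\rangle=0$ for all $p\in\{0,\dots,L\}$. *)

From HB Require Import structures.
From mathcomp Require Import all_boot all_order all_algebra.
Set Implicit Arguments. Unset Strict Implicit. Unset Printing Implicit Defensive.
Import Order.TTheory GRing.Theory Num.Theory.
Local Open Scope ring_scope.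

Section Qubits.
(* scalars: any numeric algebraically closed field (the complex numbers are an instance) *)
Variable C : numClosedFieldType.
Variable V : finType.

(* computational basis states |x>, x : V -> {0,1} *)
Definition config := {ffun V -> bool}.
Definition dimH := #|{: config}|.
Definition Op := 'M[C]_dimH.
Definition Ket := 'cV[C]_dimH.

Definition mk_op (f : config -> config -> C) : Op :=
  \matrix_(a, b) f (enum_val a) (enum_val b).
Definition op_entry (A : Op) (x y : config) : C := A (enum_rank x) (enum_rank y).

Definition setv (x : config) (i : V) (b : bool) : config :=
  [ffun j => if j == i then b else x j].

(* s_i^dagger |0>_i = |1>_i, s_i^dagger |1>_i = 0 ;  s_i its adjoint *)
Definition sdag (i : V) : Op :=
  mk_op (fun x y => ((~~ y i) && (x == setv y i true))%:R).
Definition sop (i : V) : Op :=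
  mk_op (fun x y => (y i && (x == setv y i false))%:R).

Definition vac : Ket := \col_a (enum_val a == [ffun => false])%:R.

Definition numop : Op := \sum_i (sdag i *m sop i).

Definition prod_ops (s : seq Op) : Op := foldr (@mulmx C dimH dimH dimH) 1%:M s.

(* normal-ordered string  s^dag_{j1}..s^dag_{jn} s_{k1}..s_{km}, J = {j}, K = {k} *)
Definition nstring (J K : {set V}) : Op :=
  prod_ops [seq sdag j | j <- enum J] *m prod_ops [seq sop k | k <- enum K].

Definition tower (Qd : Op) (p : nat) : Ket := iter p (mulmx Qd) vac.

(* A is supported in X: A = A_X (x) I_{V \ X} *)
Definition supported_in (A : Op) (X : {set V}) : Prop :=
  (forall x y : config, (exists v, v \notin X /\ x v != y v) -> op_entry A x y = 0) /\
  (forall x y x' y' : config,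
      (forall v, v \notin X -> x v = y v) ->
      (forall v, v \notin X -> x' v = y' v) ->
      (forall v, v \in X -> x v = x' v /\ y v = y' v) ->
      op_entry A x y = op_entry A x' y').

(* A has an expansion in normal-ordered strings all of whose strings with
   nonzero coefficient satisfy P (the expansion is unique) *)
Definition expands_with (A : Op) (P : {set V} -> {set V} -> bool) : Prop :=
  exists c : {set V} -> {set V} -> C,
    A = \sum_(J : {set V}) \sum_(K : {set V}) (c J K *: nstring J K) /\
    (forall J K, c J K != 0 -> P J K).

Definition klocal (A : Op) (k : nat) : Prop :=
  expands_with A (fun J K => #|J :|: K| <= k)%N.

Variable adj : rel V.

Fixpoint within (n : nat) (i j : V) : bool :=
  if n is n'.+1 then within n' i j || [exists l, within n' i l && adj l j]
  else i == j.

(* diam(X) <= D, where diam(X) = 1 + max pairwise distance *)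
Definition diam_le (X : {set V}) (D : nat) : bool :=
  (0 < D)%N && [forall i in X, forall j in X, within D.-1 i j].

Definition range_le (A : Op) (R : nat) : Prop :=
  expands_with A (fun J K => diam_le (J :|: K) R).

Definition p1_decomp (Qd : Op) (D : nat) (H : Op) (Om om : C)
    (h : {set V} -> Op) : Prop :=
  (forall X, diam_le X D ->
     [/\ supported_in (h X) X, h X *m tower Qd 1 = 0 & h X *m vac = 0]) /\
  H = Om *: (1%:M : Op) + om *: numop + \sum_(X | diam_le X D) h X.

Definition prop1 (Qd : Op) (alpha : nat -> nat) : Prop :=
  forall R : nat, (0 < R)%N -> forall H : Op, range_le H R ->
    (exists l : C, H *m tower Qd 0 = l *: tower Qd 0) ->
    (exists l : C, H *m tower Qd 1 = l *: tower Qd 1) ->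
    exists (Om om : C) (h : {set V} -> Op), p1_decomp Qd (alpha R) H Om om h.

Definition prop2 (Qd : Op) (L : nat) (beta : nat -> C) : Prop :=
  forall Rmax : nat, (0 < Rmax)%N -> forall h : {set V} -> Op,
    (forall X, diam_le X Rmax ->
       [/\ supported_in (h X) X, h X *m tower Qd 1 = 0 & h X *m vac = 0]) ->
    forall (p : nat) (E' : C), (p <= L)%N ->
      p%:R <= #|V|%:R / beta Rmax ->
      (\sum_(X | diam_le X Rmax) h X) *m tower Qd p = E' *: tower Qd p ->
      E' = 0.

End Qubits.

Definition prop3 (C : numClosedFieldType) (V : finType) (Qd : Op C V) (L : nat)
    (gamma : nat -> C) : Prop :=
  forall k : nat, (0 < k)%N -> forall H : Op C V, klocal H k ->
    (forall q : nat, (q <= L)%N -> q%:R <= gamma k -> H *m tower Qd q = 0) ->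
    forall p : nat, (p <= L)%N -> H *m tower Qd p = 0.

(* The operator [h := H - Om - om N] is, by the decomposition of (P.1), a sum of
   local terms annihilating |0> and |Q>, and it is still k-local since the
   identity and the number operator [N] are.  Because [N |Q^q> = c q |Q^q>], every
   |Q^q> is an eigenvector of [h] with eigenvalue [E_q - Om - c om q].  For
   [q <= gamma k] we have [q <= #|V| / beta (alpha R)], so (P.2) forces these
   eigenvalues to vanish; (P.3) then propagates [h |Q^q> = 0] to all [q <= L],
   and [|Q^p> <> 0] gives [E_p = Om + c om p]. *)
From HB Require Import structures.
From mathcomp Require Import all_boot all_order all_algebra.
Set Implicit Arguments. Unset Strict Implicit. Unset Printing Implicit Defensive.
Import Order.TTheory GRing.Theory Num.Theory.
Local Open Scope ring_scope.

Section Expansions.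
Variable C : numClosedFieldType.
Variable V : finType.
Implicit Types (A B : Op C V) (P : {set V} -> {set V} -> bool).

Lemma expands_with0 P : expands_with (0 : Op C V) P.
Proof.
exists (fun _ _ => 0); split; last by move=> J K; rewrite eqxx.
by rewrite big1 // => J _; rewrite big1 // => K _; rewrite scale0r.
Qed.

Lemma expands_withD A B P :
  expands_with A P -> expands_with B P -> expands_with (A + B) P.
Proof.
move=> [a [-> Ha]] [b [-> Hb]]; exists (fun J K => a J K + b J K); split.
  rewrite -big_split; apply: eq_bigr => J _; rewrite -big_split.
  by apply: eq_bigr => K _; rewrite scalerDl.
move=> J K; have [a0|/Ha //] := eqVneq (a J K) 0.
by rewrite a0 add0r; exact: Hb.
Qed.

Lemma expands_withZ A P (x : C) : expands_with A P -> expands_with (x *: A) P.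
Proof.
move=> [a [-> Ha]]; exists (fun J K => x * a J K); split.
  rewrite scaler_sumr; apply: eq_bigr => J _; rewrite scaler_sumr.
  by apply: eq_bigr => K _; rewrite scalerA.
by move=> J K; have [->|/Ha //] := eqVneq (a J K) 0; rewrite mulr0 eqxx.
Qed.

Lemma expands_with_sum (I : finType) (F : I -> Op C V) P :
  (forall i, expands_with (F i) P) -> expands_with (\sum_i F i) P.
Proof.
move=> HF; apply: (big_ind (fun A => expands_with A P)) => [|A B|i _].
- exact: expands_with0.
- exact: expands_withD.
- exact: HF.
Qed.

Lemma expands_with_nstring J0 K0 P :
  P J0 K0 -> expands_with (nstring C J0 K0) P.
Proof.
move=> HP; exists (fun J K => ((J == J0) && (K == K0))%:R); split.
  rewrite (bigD1 J0) //= [X in _ + X]big1 => [|J /negbTE nJ]; last first.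
    by rewrite big1 // => K _; rewrite nJ scale0r.
  rewrite addr0 (bigD1 K0) //= [X in _ + X]big1 => [|K /negbTE nK]; last first.
    by rewrite eqxx nK scale0r.
  by rewrite !eqxx scale1r addr0.
move=> J K; have [->|nJ] := eqVneq J J0; have [->|nK] := eqVneq K K0 => //=;
  by rewrite ?(negbTE nJ) ?(negbTE nK) ?andbF eqxx.
Qed.

Lemma klocal_scalar (k : nat) (a : C) : klocal (a *: (1%:M : Op C V)) k.
Proof.
apply: expands_withZ; have -> : (1%:M : Op C V) = nstring C set0 set0.
  by rewrite /nstring !enum_set0 /= mulmx1.
by apply: expands_with_nstring; rewrite setU0 cards0.
Qed.

Lemma klocal_numop (k : nat) : (0 < k)%N -> klocal (numop C V) k.
Proof.
move=> k_gt0; apply: expands_with_sum => i.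
have -> : sdag C i *m sop C i = nstring C [set i] [set i].
  by rewrite /nstring !enum_set1 /= !mulmx1.
by apply: expands_with_nstring; rewrite setUid cards1.
Qed.

Lemma klocal_sub_scalar_numop (k : nat) A (a b : C) : (0 < k)%N ->
  klocal A k -> klocal (A - a *: 1%:M - b *: numop C V) k.
Proof.
move=> k_gt0 locA; apply: expands_withD; first apply: expands_withD => //.
  by rewrite -scaleNr; apply: klocal_scalar.
by rewrite -scaleNr; apply: expands_withZ; apply: klocal_numop.
Qed.

End Expansions.

Section Tower.
Variable C : numClosedFieldType.
Variable V : finType.
Variable Qd : Op C V.

Lemma numop_vac : numop C V *m vac C V = 0.
Proof.
rewrite /numop mulmx_suml big1 // => i _; rewrite -mulmxA.
suff -> : sop C i *m vac C V = 0 by rewrite mulmx0.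
apply/matrixP => a b; rewrite !mxE big1 // => j _; rewrite !mxE mulrC.
by case: eqP => [->|_]; rewrite ?ffunE ?mulr0 ?mul0r.
Qed.

Lemma numop_tower (c : C) :
  numop C V *m Qd - Qd *m numop C V = c *: Qd ->
  forall p, numop C V *m tower Qd p = (c * p%:R) *: tower Qd p.
Proof.
move=> /eqP; rewrite subr_eq => /eqP NQd.
elim=> [|p IHp]; first by rewrite mulr0 scale0r numop_vac.
rewrite /tower iterS -/(tower Qd p) mulmxA NQd mulmxDl -mulmxA IHp.
by rewrite -scalemxAl -scalemxAr -scalerDl -natr1 mulrDr mulr1 addrC.
Qed.

Lemma tower_neq0 (L p : nat) :
  tower Qd L != 0 -> (p <= L)%N -> tower Qd p != 0.
Proof.
move=> towerL_neq0 le_pL; apply: contraNneq towerL_neq0 => towerp0.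
rewrite /tower -(subnK le_pL) iterD -/(tower Qd p) towerp0.
by apply/eqP; elim: (L - p)%N => //= n ->; rewrite mulmx0.
Qed.

End Tower.

Lemma local_tower_eigenvalues_eq0 (C : numClosedFieldType) (V : finType)
    (adj : rel V) (Qd : Op C V) (L : nat) (beta gamma : nat -> C)
    (P2 : prop2 adj Qd L beta) (P3 : prop3 Qd L gamma)
    (D k : nat) (D_gt0 : (0 < D)%N) (k_gt0 : (0 < k)%N)
    (beta_gt0 : 0 < beta D) (gamma_gt0 : 0 < gamma k)
    (N_large : beta D * gamma k < #|V|%:R)
    (h : {set V} -> Op C V)
    (h_local : forall X, diam_le adj X D ->
       [/\ supported_in (h X) X, h X *m tower Qd 1 = 0 & h X *m vac C V = 0])
    (hs_klocal : klocal (\sum_(X | diam_le adj X D) h X) k)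
    (e : nat -> C)
    (hs_eigen : forall q, (q <= L)%N ->
       (\sum_(X | diam_le adj X D) h X) *m tower Qd q = e q *: tower Qd q) :
  tower Qd L != 0 -> forall p, (p <= L)%N -> e p = 0.
Proof.
move=> towerL_neq0 p le_pL.
have eq0_small q : (q <= L)%N -> q%:R <= gamma k -> e q = 0.
  move=> le_qL le_q_gamma.
  apply: (P2 D D_gt0 h h_local q (e q) le_qL _ (hs_eigen q le_qL)).
  rewrite ler_pdivlMr // mulrC; apply: le_trans (ltW N_large).
  by rewrite ler_wpM2l // ltW.
have : (\sum_(X | diam_le adj X D) h X) *m tower Qd p = 0.
  apply: (P3 k k_gt0 _ hs_klocal) le_pL => q le_qL le_q_gamma.
  by rewrite hs_eigen // eq0_small // scale0r.
rewrite hs_eigen // => /eqP; rewrite scaler_eq0.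
by rewrite (negbTE (tower_neq0 towerL_neq0 le_pL)) orbF => /eqP.
Qed.

(* (P.1) and the range bound on [H] only serve to produce the decomposition,
   which the statement receives as a hypothesis. *)
Theorem theorem3 (C : numClosedFieldType) (V : finType) (adj : rel V)
    (adj_sym : symmetric adj) (adj_irr : irreflexive adj)
    (Qd : Op C V) (c : C)
    (Hcomm : numop C V *m Qd - Qd *m numop C V = c *: Qd)
    (L : nat) (HL1 : tower Qd L != 0)
    (HL2 : forall p : nat, (L < p)%N -> tower Qd p = 0)
    (alpha : nat -> nat) (beta gamma : nat -> C)
    (alpha_pos : forall n : nat, (0 < n)%N -> (0 < alpha n)%N)
    (beta_pos : forall n : nat, (0 < n)%N -> 0 < beta n)
    (gamma_pos : forall n : nat, (0 < n)%N -> 0 < gamma n)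
    (P1 : prop1 adj Qd alpha) (P2 : prop2 adj Qd L beta) (P3 : prop3 Qd L gamma)
    (k R : nat) (Hk : (0 < k)%N) (HR : (0 < R)%N)
    (H : Op C V) (Hloc : klocal H k) (Hrange : range_le adj H R)
    (E : nat -> C)
    (HE : forall p : nat, (p <= L)%N -> H *m tower Qd p = E p *: tower Qd p)
    (HN : beta (alpha R) * gamma k < #|V|%:R) :
  forall (Om om : C) (h : {set V} -> Op C V),
    p1_decomp adj Qd (alpha R) H Om om h ->
    forall p : nat, (p <= L)%N -> E p = Om + c * om * p%:R.
Proof.
move=> Om om h [h_local H_decomp] p le_pL.
have alphaR_gt0 := alpha_pos R HR.
have hs_def : \sum_(X | diam_le adj X (alpha R)) h X
              = H - Om *: 1%:M - om *: numop C V.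
  by rewrite H_decomp -addrA -opprD addrAC subrr add0r.
have hs_eigen q : (q <= L)%N -> (\sum_(X | diam_le adj X (alpha R)) h X)
    *m tower Qd q = (E q - (Om + c * om * q%:R)) *: tower Qd q.
  move=> le_qL; rewrite hs_def !mulmxBl HE // -!scalemxAl mul1mx.
  rewrite (numop_tower Hcomm) scalerA !scalerBl scalerDl opprD addrA.
  by rewrite mulrA [om * c]mulrC.
apply/eqP; rewrite -subr_eq0; apply/eqP.
apply: (local_tower_eigenvalues_eq0 P2 P3 alphaR_gt0 Hk (beta_pos _ alphaR_gt0)
  (gamma_pos _ Hk) HN h_local _ hs_eigen HL1 le_pL).
by rewrite hs_def; apply: klocal_sub_scalar_numop.
Qed.
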